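(* Let $f\in C^\infty([0,\infty))$ be any solution of \[ f''(y)+\left(\frac{2}{y}-\frac{y}{2}\right)f'(y)-\frac{1}{y^2}\sin(2f(y))=0\ \ (y>0),\qquad f(0)=0,\qquad \lim_{y\to\infty}f(y)\ \text{exists and is finite}. \] Then $f^{(2k)}(0)=0$ for all $k\in\mathbb N_0$, and for each $k\in\mathbb N$ there exists a constant $C_k>0$ such that $\lvert f^{(k)}(y)\rvert\le C_k\,y^{-2-k}$ for all $y\ge 1$. *)

From Stdlib Require Import Reals.
From Coquelicot Require Import Coquelicot.
Open Scope R_scope.

(* [smooth_derivs f D] : f is C^infinity on [0, +oo), and D k is its k-th
   derivative there.  D 0 agrees with f on [0,oo); for x > 0, D (k+1) x is the
   (two-sided) derivative of D k at x; at 0, D (k+1) 0 is the right derivative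
   of D k at 0.  (Continuity of every D k on [0,oo) follows from the
   differentiability of D k.)  Values of D k on (-oo,0) are irrelevant. *)
Definition smooth_derivs (f : R -> R) (D : nat -> R -> R) : Prop :=
  (forall x, 0 <= x -> D 0%nat x = f x) /\
  (forall (k : nat) (x : R), 0 < x -> is_derive (D k) x (D (S k) x)) /\
  (forall k : nat,
     filterlim (fun h => (D k h - D k 0) / h) (at_right 0)
               (locally (D (S k) 0))).

(* Writing the equation as [(y^2 f')' = (y/2) (y^2 f') + sin (2 f)], a barrier argument shows
   that a solution of [v' - (y/2) v = O(y^-p)] on [1, oo) is either [O(y^-(p+1))] or grows like
   [exp (y^2/4)]. For [v = y^2 f'] growth is excluded because [f] has a finite limit, so
   [f' = O(y^-3)]. Differentiating the equation k times gives
   [f^(k+2) - (y/2) f^(k+1) - (k/2) f^(k) = O(y^-(k+2))]; this first yields a crude bound on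
   [f^(k+2)], which excludes growth, and then the barrier gives [f^(k+2) = O(y^-(k+4))].

   At 0, the k-th derivative of [y^2 f'' + 2 y f' - 2 f] is [(k-1)(k+2) f^(k)(0)], while by the
   equation it equals that of [sin (2 f) - 2 f + y^3 f' / 2]. As [x |-> sin (2 x) - 2 x] is odd
   and vanishes to third order, for even k every term of the latter contains a factor
   [f^(j)(0)] with j even and j < k, whence [f^(k)(0) = 0] by induction. Parity and order of
   vanishing at 0 are propagated through sums and products by towers of successive
   derivatives, which avoids Leibniz's formula. *)

From Stdlib Require Import Reals Lra Lia Classical.
From Coquelicot Require Import Coquelicot.
Open Scope R_scope.

Definition is_derive_pos (g g' : R -> R) : Prop :=
  forall y, 0 < y -> is_derive g y (g' y).

Lemma is_derive_pos_ext g h g' :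
  (forall y, 0 < y -> g y = h y) -> is_derive_pos g g' -> is_derive_pos h g'.
Proof.
  intros E Dg y Hy. apply (is_derive_ext_loc g); [|now apply Dg].
  exists (mkposreal y Hy). intros t Ht. apply E.
  apply Rabs_def2 in Ht. unfold minus, plus, opp in Ht. simpl in Ht. lra.
Qed.

Lemma is_derive_pos_ext_r g g' h' :
  (forall y, 0 < y -> g' y = h' y) -> is_derive_pos g g' -> is_derive_pos g h'.
Proof. intros E Dg y Hy. rewrite <- E by exact Hy. now apply Dg. Qed.

Lemma is_derive_pos_unique g g' h' :
  is_derive_pos g g' -> is_derive_pos g h' -> forall y, 0 < y -> g' y = h' y.
Proof.
  intros D1 D2 y Hy.
  now rewrite <- (is_derive_unique _ _ _ (D1 y Hy)), (is_derive_unique _ _ _ (D2 y Hy)).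
Qed.

Lemma is_derive_pos_plus g g' h h' : is_derive_pos g g' -> is_derive_pos h h' ->
  is_derive_pos (fun y => g y + h y) (fun y => g' y + h' y).
Proof. intros Dg Dh y Hy. apply (is_derive_plus g h); auto. Qed.

Lemma is_derive_pos_scal k g g' : is_derive_pos g g' ->
  is_derive_pos (fun y => k * g y) (fun y => k * g' y).
Proof. intros Dg y Hy. now apply is_derive_scal, Dg. Qed.

Lemma is_derive_pos_mult g g' h h' : is_derive_pos g g' -> is_derive_pos h h' ->
  is_derive_pos (fun y => g y * h y) (fun y => g' y * h y + g y * h' y).
Proof. intros Dg Dh y Hy. apply (is_derive_mult g h); auto. intros; apply Rmult_comm. Qed.

Lemma is_derive_pos_const k : is_derive_pos (fun _ => k) (fun _ => 0).
Proof. intros y _. auto_derive; auto. Qed.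

Lemma is_derive_pos_id : is_derive_pos (fun y => y) (fun _ => 1).
Proof. intros y _. auto_derive; auto. Qed.

Definition lim0 (g : R -> R) (l : R) : Prop := filterlim g (at_right 0) (locally l).

Lemma lim0_ext g h l : (forall y, 0 < y -> g y = h y) -> lim0 g l -> lim0 h l.
Proof. intros E L. unfold lim0, at_right. eapply filterlim_within_ext; eauto. Qed.

Lemma lim0_unique g a b : lim0 g a -> lim0 g b -> a = b.
Proof. apply (filterlim_locally_unique (F := at_right 0) g). Qed.

Lemma lim0_const k : lim0 (fun _ => k) k.
Proof. apply filterlim_const. Qed.

Lemma lim0_id : lim0 (fun y => y) 0.
Proof. intros P [eps HP]. exists eps. intros y Hy _. now apply HP. Qed.

Lemma lim0_plus g h a b : lim0 g a -> lim0 h b -> lim0 (fun y => g y + h y) (a + b).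
Proof. intros Lg Lh. eapply filterlim_comp_2; eauto. apply (filterlim_plus a b). Qed.

Lemma lim0_mult g h a b : lim0 g a -> lim0 h b -> lim0 (fun y => g y * h y) (a * b).
Proof. intros Lg Lh. eapply filterlim_comp_2; eauto. apply (filterlim_mult a b). Qed.

Lemma lim0_scal k g a : lim0 g a -> lim0 (fun y => k * g y) (k * a).
Proof. intros. apply lim0_mult; auto. apply lim0_const. Qed.

Lemma lim0_comp (F : R -> R) g a : continuous F a -> lim0 g a -> lim0 (fun y => F (g y)) (F a).
Proof. intros HF Lg. now apply (filterlim_comp _ _ _ g F _ (locally a)). Qed.

Lemma lim0_of_right_derive g d :
  filterlim (fun h => (g h - g 0) / h) (at_right 0) (locally d) -> lim0 g (g 0).
Proof.
  intros Ld.
  assert (L := lim0_plus _ _ _ _ (lim0_const (g 0)) (lim0_mult _ _ _ _ lim0_id Ld)).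
  rewrite Rmult_0_l, Rplus_0_r in L. revert L. apply lim0_ext.
  intros y Hy. field. lra.
Qed.

(** * Towers of successive derivatives *)

Fixpoint tower (n : nat) (P : nat -> (R -> R) -> Prop) (g : R -> R) : Prop :=
  P 0%nat g /\
  match n with
  | O => True
  | S n' => exists g', is_derive_pos g g' /\ tower n' (fun k => P (S k)) g'
  end.

Definition pos_local (P : nat -> (R -> R) -> Prop) : Prop :=
  forall k g h, (forall y, 0 < y -> g y = h y) -> P k g -> P k h.

Lemma tower_pred n P g : tower (S n) P g -> tower n P g.
Proof.
  revert P g; induction n as [|n IH]; intros P g [H0 [g' [Dg T]]]; split; auto.
  exists g'. split; auto.
Qed.

Lemma tower_impl n (P Q : nat -> (R -> R) -> Prop) g :
  (forall k u, P k u -> Q k u) -> tower n P g -> tower n Q g.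
Proof.
  revert P Q g; induction n as [|n IH]; intros P Q g PQ [H0 T]; split; auto.
  destruct T as [g' [Dg T]]. exists g'. split; auto. exact (IH _ _ _ (fun k => PQ (S k)) T).
Qed.

Lemma tower_plus n P g h :
  (forall k u v, P k u -> P k v -> P k (fun y => u y + v y)) ->
  tower n P g -> tower n P h -> tower n P (fun y => g y + h y).
Proof.
  revert P g h; induction n as [|n IH]; intros P g h HP [G0 Tg] [H0 Th]; split; auto.
  destruct Tg as [g' [Dg Tg]], Th as [h' [Dh Th]].
  exists (fun y => g' y + h' y). split.
  - now apply is_derive_pos_plus.
  - apply IH; auto.
Qed.

Lemma tower_scal n P c g :
  (forall k u, P k u -> P k (fun y => c * u y)) -> tower n P g -> tower n P (fun y => c * g y).
Proof.
  revert P g; induction n as [|n IH]; intros P g HP [G0 Tg]; split; auto.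
  destruct Tg as [g' [Dg Tg]].
  exists (fun y => c * g' y). split.
  - now apply is_derive_pos_scal.
  - apply IH; auto.
Qed.

(* In [(gh)' = g'h + gh'] one factor moves up a level, which the level-additive
   hypothesis [Hmult] absorbs. *)
Lemma tower_mult n P Q PQ g h :
  (forall k u v, PQ k u -> PQ k v -> PQ k (fun y => u y + v y)) ->
  (forall i j u v, P i u -> Q j v -> PQ (i + j)%nat (fun y => u y * v y)) ->
  tower n P g -> tower n Q h -> tower n PQ (fun y => g y * h y).
Proof.
  revert P Q PQ g h; induction n as [|n IH]; intros P Q PQ g h Hplus Hmult Tg Th.
  { split; [exact (Hmult 0 0 _ _ (proj1 Tg) (proj1 Th))%nat | exact I]. }
  pose proof (tower_pred _ _ _ Tg) as Tg0. pose proof (tower_pred _ _ _ Th) as Th0.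
  destruct Tg as [G0 [g' [Dg Tg]]], Th as [H0 [h' [Dh Th]]].
  split; [exact (Hmult 0 0 _ _ G0 H0)%nat|].
  exists (fun y => g' y * h y + g y * h' y). split; [now apply is_derive_pos_mult|].
  apply tower_plus; [intros k; apply Hplus|..].
  - exact (IH _ _ _ _ _ (fun k => Hplus (S k)) (fun i => Hmult (S i)) Tg Th0).
  - refine (IH _ _ _ _ _ (fun k => Hplus (S k)) _ Tg0 Th).
    intros i j u v Pu Qv. rewrite <- Nat.add_succ_r. now apply Hmult.
Qed.

Lemma tower_of_chain n P (F : nat -> R -> R) g :
  pos_local P -> (forall k, is_derive_pos (F k) (F (S k))) ->
  (forall y, 0 < y -> F 0%nat y = g y) ->
  (forall k, (k <= n)%nat -> P k (F k)) -> tower n P g.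
Proof.
  revert P F g; induction n as [|n IH]; intros P F g HP DF E PF.
  all: split; [apply (HP 0%nat (F 0%nat)), PF; auto; lia|].
  - exact I.
  - exists (F 1%nat). split; [apply (is_derive_pos_ext (F 0%nat)); auto|].
    apply (IH _ (fun k => F (S k))); auto.
    + intros k; apply HP.
    + intros k Hk. apply PF. lia.
Qed.

Lemma chain_of_tower n P (F : nat -> R -> R) g :
  pos_local P -> (forall k, is_derive_pos (F k) (F (S k))) ->
  (forall y, 0 < y -> F 0%nat y = g y) ->
  tower n P g -> forall k, (k <= n)%nat -> P k (F k).
Proof.
  revert P F g; induction n as [|n IH]; intros P F g HP DF E [G0 T] k Hk.
  all: destruct k as [|k]; [apply (HP 0%nat g); auto; intros; symmetry; auto|].
  - lia.
  - destruct T as [g' [Dg T]].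
    apply (IH (fun k => P (S k)) (fun k => F (S k)) g'); auto; [intros j; apply HP| |lia].
    apply (is_derive_pos_unique g); auto. apply (is_derive_pos_ext (F 0%nat)); auto.
Qed.

(** * Polynomial decay at infinity *)

Definition decays (a : nat) (g : R -> R) : Prop :=
  exists C, forall y, 1 <= y -> Rabs (g y) <= C / y ^ a.

Definition decay_tower (n a : nat) : (R -> R) -> Prop := tower n (fun k => decays (a + k)).

Lemma decays_ext a g h : (forall y, 0 < y -> g y = h y) -> decays a g -> decays a h.
Proof. intros E [C HC]. exists C. intros y Hy. rewrite <- E by lra. auto. Qed.

Lemma decay_bound_nonneg a g C : (forall y, 1 <= y -> Rabs (g y) <= C / y ^ a) -> 0 <= C.
Proof.
  intros HC. specialize (HC 1 (Rle_refl _)). rewrite pow1, Rdiv_1_r in HC.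
  pose proof (Rabs_pos (g 1)). lra.
Qed.

Lemma decays_le a b g : (b <= a)%nat -> decays a g -> decays b g.
Proof.
  intros Hab [C HC]. exists C. intros y Hy. pose proof (decay_bound_nonneg _ _ _ HC).
  eapply Rle_trans; [now apply HC|]. apply Rmult_le_compat_l; auto.
  apply Rinv_le_contravar; [apply pow_lt; lra | now apply Rle_pow].
Qed.

Lemma decays_pos_bound a g :
  decays a g -> exists C, 0 < C /\ forall y, 1 <= y -> Rabs (g y) <= C * / y ^ a.
Proof.
  intros [C HC]. exists (Rabs C + 1). split; [pose proof (Rabs_pos C); lra|].
  intros y Hy. eapply Rle_trans; [apply HC, Hy|]. apply Rmult_le_compat_r.
  - apply Rlt_le, Rinv_0_lt_compat, pow_lt. lra.
  - pose proof (Rle_abs C). lra.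
Qed.

Lemma decays_bounded a g : decays a g -> exists M, forall y, 1 <= y -> Rabs (g y) <= M.
Proof.
  intros Dg. destruct (decays_le a 0 g ltac:(lia) Dg) as [M HM]. exists M.
  intros y Hy. rewrite <- (Rdiv_1_r M). exact (HM y Hy).
Qed.

Lemma decays_plus a g h : decays a g -> decays a h -> decays a (fun y => g y + h y).
Proof.
  intros [C1 H1] [C2 H2]. exists (C1 + C2). intros y Hy.
  eapply Rle_trans; [apply Rabs_triang|].
  specialize (H1 y Hy); specialize (H2 y Hy). unfold Rdiv in *. lra.
Qed.

Lemma decays_scal a k g : decays a g -> decays a (fun y => k * g y).
Proof.
  intros [C H]. exists (Rabs k * C). intros y Hy. rewrite Rabs_mult.
  unfold Rdiv; rewrite Rmult_assoc. apply Rmult_le_compat_l; [apply Rabs_pos | apply H; auto].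
Qed.

Lemma decays_opp a g : decays a g -> decays a (fun y => - g y).
Proof. intros [C H]. exists C. intros y Hy. rewrite Rabs_Ropp. auto. Qed.

Lemma decays_mult a b g h : decays a g -> decays b h -> decays (a + b) (fun y => g y * h y).
Proof.
  intros [C1 H1] [C2 H2]. exists (C1 * C2). intros y Hy.
  pose proof (decay_bound_nonneg _ _ _ H1). pose proof (decay_bound_nonneg _ _ _ H2).
  assert (0 < y ^ a) by (apply pow_lt; lra). assert (0 < y ^ b) by (apply pow_lt; lra).
  rewrite Rabs_mult, pow_add.
  replace (C1 * C2 / (y ^ a * y ^ b)) with ((C1 / y ^ a) * (C2 / y ^ b)) by (field; lra).
  apply Rmult_le_compat; auto using Rabs_pos.
Qed.

Lemma decays_sin g : decays 0 (fun y => sin (g y)).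
Proof. exists 1. intros y _. rewrite pow_O, Rdiv_1_r. apply Rabs_le, SIN_bound. Qed.

Lemma decays_cos g : decays 0 (fun y => cos (g y)).
Proof. exists 1. intros y _. rewrite pow_O, Rdiv_1_r. apply Rabs_le, COS_bound. Qed.

Lemma decays_mul_half_id a g : decays (S a) g -> decays a (fun y => y / 2 * g y).
Proof.
  intros [C HC]. exists (C / 2). intros y Hy.
  rewrite Rabs_mult, (Rabs_right (y / 2)) by lra.
  replace (C / 2 / y ^ a) with (y / 2 * (C / y ^ S a))
    by (simpl; field; split; [apply pow_nonzero|]; lra).
  apply Rmult_le_compat_l; [lra | auto].
Qed.

Lemma decays_of_mul_sq a g : decays a (fun y => y ^ 2 * g y) -> decays (2 + a) g.
Proof.
  intros [C HC]. exists C. intros y Hy. specialize (HC y Hy).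
  assert (0 < y ^ 2) by (apply pow_lt; lra). assert (0 < y ^ a) by (apply pow_lt; lra).
  rewrite Rabs_mult, (Rabs_right (y ^ 2)) in HC by lra.
  rewrite pow_add. apply (Rmult_le_reg_l (y ^ 2)); auto.
  replace (y ^ 2 * (C / (y ^ 2 * y ^ a))) with (C / y ^ a) by (field; lra). exact HC.
Qed.

Lemma decay_tower_cons n a g g' :
  decays a g -> is_derive_pos g g' -> decay_tower n (S a) g' -> decay_tower (S n) a g.
Proof.
  intros Dg Hg T. split; [now rewrite Nat.add_0_r|]. exists g'. split; auto.
  revert T. apply tower_impl. intros k u. now rewrite Nat.add_succ_r.
Qed.

Lemma decay_tower_plus n a g h :
  decay_tower n a g -> decay_tower n a h -> decay_tower n a (fun y => g y + h y).
Proof. apply tower_plus. intros k. apply decays_plus. Qed.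

Lemma decay_tower_scal n a k g : decay_tower n a g -> decay_tower n a (fun y => k * g y).
Proof. apply tower_scal. intros i. apply decays_scal. Qed.

Lemma decay_tower_mult n a b g h :
  decay_tower n a g -> decay_tower n b h -> decay_tower n (a + b) (fun y => g y * h y).
Proof.
  apply tower_mult; [intros k; apply decays_plus|].
  intros i j u v Du Dv. replace (a + b + (i + j))%nat with ((a + i) + (b + j))%nat by lia.
  now apply decays_mult.
Qed.

Lemma decays_pos_local a : pos_local (fun k => decays (a + k)).
Proof. intros k g h E. now apply decays_ext. Qed.

Lemma decay_tower_of_chain n a (F : nat -> R -> R) g :
  (forall k, is_derive_pos (F k) (F (S k))) -> (forall y, 0 < y -> F 0%nat y = g y) ->
  (forall k, (k <= n)%nat -> decays (a + k) (F k)) -> decay_tower n a g.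
Proof. apply (tower_of_chain n _ F g (decays_pos_local a)). Qed.

Lemma decays_of_decay_tower n a (F : nat -> R -> R) g :
  (forall k, is_derive_pos (F k) (F (S k))) -> (forall y, 0 < y -> F 0%nat y = g y) ->
  decay_tower n a g -> forall k, (k <= n)%nat -> decays (a + k) (F k).
Proof. intros DF E. exact (chain_of_tower n _ F g (decays_pos_local a) DF E). Qed.

Lemma decay_tower_inv n : decay_tower n 1 (fun y => / y).
Proof.
  induction n as [|n IH].
  all: assert (Dinv : decays 1 (fun y => / y)).
  1,3: exists 1; intros y Hy; rewrite pow_1, Rdiv_1_l;
       apply Rabs_le; pose proof (Rinv_0_lt_compat y ltac:(lra)); split; lra.
  - split; [exact Dinv | exact I].
  - apply (decay_tower_cons _ _ _ (fun y => -1 * (/ y * / y))); auto.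
    + intros y Hy. assert (H := is_derive_inv (fun y => y) y _ (is_derive_id y) ltac:(lra)).
      replace (-1 * (/ y * / y)) with (- one / y ^ 2) by (simpl; unfold one; simpl; field; lra).
      exact H.
    + apply decay_tower_scal, (decay_tower_mult n 1 1); auto.
Qed.

(** * Parity of jets at 0 *)

Definition vanishes_if (C : Prop) (g : R -> R) : Prop := exists l, lim0 g l /\ (C -> l = 0).

(* [jet_tower n p N M g]: the right limits at 0 of g, g', ..., g^(n) exist, and the k-th one
   vanishes when k < M (g vanishes to order M), or when k < N and k is even for p = true,
   odd for p = false (up to order N, g has the parity of an odd, resp. even, function). *)
Definition jet_zero (p : bool) (N M k : nat) : Prop :=
  (k < M)%nat \/ (k < N)%nat /\ xorb p (Nat.odd k) = true.

Definition jet_tower (n : nat) (p : bool) (N M : nat) : (R -> R) -> Prop :=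
  tower n (fun k => vanishes_if (jet_zero p N M k)).

Lemma vanishes_if_weaken (C C' : Prop) g : (C' -> C) -> vanishes_if C g -> vanishes_if C' g.
Proof. intros HC [l [L Hl]]. exists l. auto. Qed.

Lemma vanishes_if_plus C g h :
  vanishes_if C g -> vanishes_if C h -> vanishes_if C (fun y => g y + h y).
Proof.
  intros [l1 [L1 H1]] [l2 [L2 H2]]. exists (l1 + l2). split; [now apply lim0_plus|].
  intros HC. rewrite (H1 HC), (H2 HC). ring.
Qed.

Lemma vanishes_if_scal C k g : vanishes_if C g -> vanishes_if C (fun y => k * g y).
Proof.
  intros [l [L H]]. exists (k * l). split; [now apply lim0_scal|].
  intros HC. rewrite (H HC). ring.
Qed.

Lemma vanishes_if_mult (C C1 C2 : Prop) g h : (C -> C1 \/ C2) ->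
  vanishes_if C1 g -> vanishes_if C2 h -> vanishes_if C (fun y => g y * h y).
Proof.
  intros HC [l1 [L1 H1]] [l2 [L2 H2]]. exists (l1 * l2). split; [now apply lim0_mult|].
  intros C0. destruct (HC C0) as [C1'|C2']; [rewrite (H1 C1') | rewrite (H2 C2')]; ring.
Qed.

Lemma jet_zero_S p N M k :
  jet_zero p N M (S k) <-> jet_zero (negb p) (pred N) (pred M) k.
Proof.
  unfold jet_zero. rewrite Nat.odd_succ, <- Nat.negb_odd.
  destruct p, (Nat.odd k); simpl; intuition lia.
Qed.

(* odd * odd and even * even are even, odd * even is odd; orders of vanishing add up. *)
Lemma jet_zero_mult p1 N1 M1 p2 N2 M2 i j :
  jet_zero (xorb p1 p2) (Nat.min (N1 + M2) (N2 + M1)) (M1 + M2) (i + j) ->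
  jet_zero p1 N1 M1 i \/ jet_zero p2 N2 M2 j.
Proof.
  unfold jet_zero. rewrite Nat.odd_add. intros H.
  destruct (Nat.lt_ge_cases i M1); [left; now left|].
  destruct (Nat.lt_ge_cases j M2); [right; now left|].
  destruct H as [H|[Hlt Hp]]; [lia|].
  destruct p1, p2, (Nat.odd i), (Nat.odd j); simpl in Hp; try discriminate;
    solve [left; right; split; [lia|reflexivity] | right; right; split; [lia|reflexivity]].
Qed.

Lemma jet_tower_cons n p N M g g' :
  vanishes_if (jet_zero p N M 0) g -> is_derive_pos g g' ->
  jet_tower n (negb p) (pred N) (pred M) g' -> jet_tower (S n) p N M g.
Proof.
  intros Vg Dg T. split; auto. exists g'. split; auto.
  revert T. apply tower_impl. intros k u. apply vanishes_if_weaken, jet_zero_S.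
Qed.

Lemma jet_tower_weaken n p N M N' M' g : (N' <= N)%nat -> (M' <= M)%nat ->
  jet_tower n p N M g -> jet_tower n p N' M' g.
Proof.
  intros HN HM. apply tower_impl. intros k u. apply vanishes_if_weaken.
  unfold jet_zero. intuition lia.
Qed.

Lemma jet_tower_plus n p N M g h :
  jet_tower n p N M g -> jet_tower n p N M h -> jet_tower n p N M (fun y => g y + h y).
Proof. apply tower_plus. intros k. apply vanishes_if_plus. Qed.

Lemma jet_tower_scal n p N M k g : jet_tower n p N M g -> jet_tower n p N M (fun y => k * g y).
Proof. apply tower_scal. intros i. apply vanishes_if_scal. Qed.

Lemma jet_tower_mult n p1 N1 M1 p2 N2 M2 g h :
  jet_tower n p1 N1 M1 g -> jet_tower n p2 N2 M2 h ->
  jet_tower n (xorb p1 p2) (Nat.min (N1 + M2) (N2 + M1)) (M1 + M2) (fun y => g y * h y).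
Proof.
  apply tower_mult; [intros k; apply vanishes_if_plus|].
  intros i j u v. apply vanishes_if_mult, jet_zero_mult.
Qed.

Lemma jet_tower_mult_le n p1 N1 M1 p2 N2 M2 N M g h :
  jet_tower n p1 N1 M1 g -> jet_tower n p2 N2 M2 h ->
  (N <= Nat.min (N1 + M2) (N2 + M1))%nat -> (M <= M1 + M2)%nat ->
  jet_tower n (xorb p1 p2) N M (fun y => g y * h y).
Proof.
  intros Tg Th HN HM.
  exact (jet_tower_weaken _ _ _ _ _ _ _ HN HM (jet_tower_mult _ _ _ _ _ _ _ _ _ Tg Th)).
Qed.

Lemma vanishes_if_pos_local p N M : pos_local (fun k => vanishes_if (jet_zero p N M k)).
Proof. intros k g h E [l [L H]]. exists l. split; auto. now apply (lim0_ext g). Qed.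

Lemma jet_tower_of_chain n p N M (F : nat -> R -> R) g :
  (forall k, is_derive_pos (F k) (F (S k))) -> (forall y, 0 < y -> F 0%nat y = g y) ->
  (forall k, (k <= n)%nat -> vanishes_if (jet_zero p N M k) (F k)) -> jet_tower n p N M g.
Proof. apply (tower_of_chain n _ F g (vanishes_if_pos_local p N M)). Qed.

Lemma vanishes_of_jet_tower n p N M (F : nat -> R -> R) g :
  (forall k, is_derive_pos (F k) (F (S k))) -> (forall y, 0 < y -> F 0%nat y = g y) ->
  jet_tower n p N M g -> forall k, (k <= n)%nat -> vanishes_if (jet_zero p N M k) (F k).
Proof. intros DF E. exact (chain_of_tower n _ F g (vanishes_if_pos_local p N M) DF E). Qed.

Lemma jet_tower_zero n p N M : jet_tower n p N M (fun _ => 0).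
Proof.
  revert p N M; induction n as [|n IH]; intros p N M.
  all: assert (V : vanishes_if (jet_zero p N M 0) (fun _ => 0))
         by (exists 0; split; [apply lim0_const | auto]).
  - split; [exact V | exact I].
  - apply (jet_tower_cons _ _ _ _ _ (fun _ => 0)); auto using is_derive_pos_const.
Qed.

Lemma jet_tower_const n N k : jet_tower n false N 0 (fun _ => k).
Proof.
  assert (V : vanishes_if (jet_zero false N 0 0) (fun _ => k)).
  { exists k. split; [apply lim0_const|]. unfold jet_zero. simpl. intuition (lia || discriminate). }
  destruct n as [|n]; [split; [exact V | exact I]|].
  apply (jet_tower_cons _ _ _ _ _ (fun _ => 0)); auto using is_derive_pos_const, jet_tower_zero.
Qed.

Lemma jet_tower_id n N : jet_tower n true N 1 (fun y => y).
Proof.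
  assert (V : vanishes_if (jet_zero true N 1 0) (fun y => y))
    by (exists 0; split; [apply lim0_id | auto]).
  destruct n as [|n]; [split; [exact V | exact I]|].
  apply (jet_tower_cons _ _ _ _ _ (fun _ => 1)); auto using is_derive_pos_id, jet_tower_const.
Qed.

(** * The Gaussian barrier *)

Definition gaussian_blowup (v : R -> R) : Prop :=
  exists eps y0, 0 < eps /\ forall y, y0 <= y -> eps * exp (y ^ 2 / 4) <= v y.

Lemma pow4_le_exp_sq y : y ^ 4 / 64 <= exp (y ^ 2 / 4).
Proof.
  set (x := y ^ 2 / 8). assert (0 <= x) by (unfold x; pose proof (pow2_ge_0 y); lra).
  replace (exp (y ^ 2 / 4)) with (exp x * exp x) by (rewrite <- exp_plus; f_equal; unfold x; lra).
  replace (y ^ 4 / 64) with (x * x) by (unfold x; field).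
  pose proof (exp_ineq1_le x). apply Rmult_le_compat; lra.
Qed.

Lemma gaussian_blowup_dominates_sq v : gaussian_blowup v ->
  forall M, exists Y, 1 <= Y /\ forall y, Y <= y -> M * y ^ 2 <= v y.
Proof.
  intros [eps [y0 [He Hv]]] M.
  set (Y := Rmax y0 (1 + 64 * (Rabs M / eps))).
  assert (0 <= Rabs M / eps) by (apply Rdiv_le_0_compat; [apply Rabs_pos | lra]).
  assert (y0 <= Y /\ 1 + 64 * (Rabs M / eps) <= Y) as [Hy0 HY]
    by (split; [apply Rmax_l | apply Rmax_r]).
  exists Y. split; [lra|]. intros y Hy.
  eapply Rle_trans; [|apply Hv; lra].
  eapply Rle_trans; [|apply Rmult_le_compat_l, pow4_le_exp_sq; lra].
  assert (HM : Rabs M <= eps * (y ^ 2 / 64)).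
  { assert (Rabs M = eps * (Rabs M / eps)) by (field; lra).
    assert (y <= y ^ 2) by (simpl; nra). nra. }
  pose proof (Rle_abs M). assert (0 <= y ^ 2) by apply pow2_ge_0.
  assert (E4 : eps * (y ^ 4 / 64) = eps * (y ^ 2 / 64) * y ^ 2) by (simpl; field).
  rewrite E4. nra.
Qed.

Lemma decays_no_blowup a v : decays a v -> ~ gaussian_blowup v.
Proof.
  intros Dv Bv. destruct (decays_bounded a v Dv) as [M HM].
  destruct (gaussian_blowup_dominates_sq v Bv (Rabs M + 1)) as [Y [HY Hv]].
  specialize (Hv Y (Rle_refl _)). specialize (HM Y HY).
  pose proof (Rle_abs (v Y)). pose proof (Rle_abs M). pose proof (Rabs_pos M).
  assert (1 <= Y ^ 2) by (simpl; nra).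
  assert ((Rabs M + 1) * 1 <= (Rabs M + 1) * Y ^ 2) by (apply Rmult_le_compat_l; lra). lra.
Qed.

Lemma finite_limit_not_derive_ge1 g g' (L : R) : is_derive_pos g g' -> is_lim g p_infty L ->
  ~ (exists Y, forall y, Y <= y -> 1 <= g' y).
Proof.
  intros Dg Hl [Y HY].
  assert (Hb : locally L (fun t => Rabs (t - L) < 1)).
  { exists (mkposreal 1 Rlt_0_1). intros t Ht. exact Ht. }
  destruct (Hl _ Hb) as [M HM].
  set (x := Rmax (Rmax M Y) 1 + 1).
  assert (M < x /\ Y + 1 <= x /\ 2 <= x) as [A1 [A2 A3]].
  { unfold x. pose proof (Rmax_l (Rmax M Y) 1). pose proof (Rmax_r (Rmax M Y) 1).
    pose proof (Rmax_l M Y). pose proof (Rmax_r M Y). lra. }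
  (* [g - y/2] is increasing, so [g (x + 4) > g x + 2]. *)
  assert (g x - x / 2 < g (x + 4) - (x + 4) / 2).
  { apply (incr_function_le (fun y => g y - y / 2) (Finite x) (Finite (x + 4))
             (fun y => g' y - 1 / 2)); simpl; try lra.
    - intros y Hx1 Hx2. apply (is_derive_minus g (fun y => y / 2)); [apply Dg; lra|].
      auto_derive; auto; lra.
    - intros y Hx1 Hx2. specialize (HY y ltac:(lra)). lra. }
  pose proof (HM x ltac:(lra)). pose proof (HM (x + 4) ltac:(lra)). simpl in *.
  apply Rabs_def2 in H0. apply Rabs_def2 in H1. lra.
Qed.

Lemma limit_no_blowup g g' h : is_derive_pos g g' -> (exists L, is_lim g p_infty (Finite L)) ->
  (forall y, 1 <= y -> h y = y ^ 2 * g' y) -> ~ gaussian_blowup h.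
Proof.
  intros Dg [L HL] Eh Bh. apply (finite_limit_not_derive_ge1 g g' L Dg HL).
  destruct (gaussian_blowup_dominates_sq h Bh 1) as [Y [HY Hh]]. exists Y. intros y Hy.
  specialize (Hh y Hy). rewrite Eh in Hh by lra.
  assert (0 < y ^ 2) by (apply pow_lt; lra). nra.
Qed.

(* If [v] ever exceeds [B / y^(p+1)] with [B = 2K + 2], then, [B / y^(p+1)] being a strict
   supersolution, [(v - B / y^(p+1)) exp(-y^2/4)] is increasing from a positive value. *)
Lemma gaussian_barrier (v w : R -> R) K p :
  (forall y, 1 <= y -> is_derive v y (w y)) -> 0 <= K ->
  (forall y, 1 <= y -> y / 2 * v y - K / y ^ p <= w y) ->
  (forall y, 1 <= y -> v y <= (2 * K + 2) / y ^ S p) \/ gaussian_blowup v.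
Proof.
  intros Dv HK Hw. set (B := 2 * K + 2).
  destruct (classic (exists y1, 1 <= y1 /\ B / y1 ^ S p < v y1)) as [[y1 [H1 H2]]|N].
  2:{ left. intros y Hy. apply Rnot_lt_le. intro. apply N. eauto. }
  right.
  set (z := fun y => (v y - B / y ^ S p) * exp (- (y ^ 2 / 4))).
  set (z' := fun y => (w y - y / 2 * v y + (K + 1) / y ^ p + B * INR (S p) / y ^ S (S p))
                      * exp (- (y ^ 2 / 4))).
  assert (Dz : forall y, 1 <= y -> is_derive z y (z' y)).
  { intros y Hy. assert (0 < y ^ p) by (apply pow_lt; lra).
    unfold z, z'. auto_derive.
    - repeat split; try (exists (w y); apply Dv; auto). apply Rgt_not_eq, Rmult_lt_0_compat; lra.
    - replace (Derive (fun x => v x) y) with (w y) by (symmetry; now apply is_derive_unique, Dv).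
      replace (- (y * (y * 1) * / 4)) with (- (y ^ 2 / 4)) by (simpl; field).
      unfold B. destruct p; simpl; field; [lra | split; [apply pow_nonzero|]; lra]. }
  assert (Pz : forall y, 1 <= y -> z' y > 0).
  { intros y Hy. assert (0 < y ^ p) by (apply pow_lt; lra).
    assert (0 <= B * INR (S p) / y ^ S (S p)).
    { apply Rdiv_le_0_compat; [apply Rmult_le_pos; [unfold B; lra | apply pos_INR]|].
      apply pow_lt; lra. }
    assert (K / y ^ p < (K + 1) / y ^ p)
      by (apply Rmult_lt_compat_r; [apply Rinv_0_lt_compat|]; lra).
    specialize (Hw y Hy). apply Rmult_lt_0_compat; [lra | apply exp_pos]. }
  assert (Inc : forall y, y1 < y -> z y1 < z y).
  { intros y Hy. apply (incr_function_le z (Finite y1) p_infty z'); simpl; auto; try lra.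
    - intros t Ht _. apply Dz. lra.
    - intros t Ht _. apply Pz. lra. }
  exists (z y1), y1. split.
  { apply Rmult_lt_0_compat; [lra | apply exp_pos]. }
  intros y Hy.
  assert (Hzy : z y1 <= z y) by (destruct (Req_dec y y1); [subst; lra | apply Rlt_le, Inc; lra]).
  assert (Ev : v y = z y * exp (y ^ 2 / 4) + B / y ^ S p).
  { unfold z. rewrite Rmult_assoc, <- exp_plus, Rplus_opp_l, exp_0. ring. }
  assert (0 <= B / y ^ S p) by (apply Rdiv_le_0_compat; [unfold B; lra | apply pow_lt; lra]).
  pose proof (Rmult_le_compat_r _ _ _ (Rlt_le _ _ (exp_pos (y ^ 2 / 4))) Hzy). lra.
Qed.

Lemma decays_of_no_blowup (v w : R -> R) p :
  (forall y, 1 <= y -> is_derive v y (w y)) ->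
  decays p (fun y => w y - y / 2 * v y) ->
  ~ gaussian_blowup v -> ~ gaussian_blowup (fun y => - v y) -> decays (S p) v.
Proof.
  intros Dv [K HK] Nv Nv'. pose proof (decay_bound_nonneg _ _ _ HK) as K0.
  exists (2 * K + 2). intros y Hy. apply Rabs_le. split.
  - destruct (gaussian_barrier (fun y => - v y) (fun y => - w y) K p) as [Hb|Hb]; auto.
    + intros t Ht. now apply (is_derive_opp v), Dv.
    + intros t Ht. specialize (HK t Ht). apply Rabs_le_between in HK. lra.
    + specialize (Hb y Hy). lra.
    + contradiction.
  - destruct (gaussian_barrier v w K p) as [Hb|Hb]; auto.
    + intros t Ht. specialize (HK t Ht). apply Rabs_le_between in HK. lra.
    + contradiction.
Qed.

Section Solution.

Variables (f : R -> R) (D : nat -> R -> R).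
Hypothesis D_derive : forall k, is_derive_pos (D k) (D (S k)).
Hypothesis D0_f : forall y, 0 <= y -> D 0%nat y = f y.
Hypothesis ode : forall y, 0 < y ->
  D 2%nat y + (2 / y - y / 2) * D 1%nat y - / (y ^ 2) * sin (2 * f y) = 0.

Let s y := sin (2 * f y).
Let c y := cos (2 * f y).

Lemma f_derive : is_derive_pos f (D 1%nat).
Proof. apply (is_derive_pos_ext (D 0%nat)); [intros; apply D0_f; lra | apply D_derive]. Qed.

Lemma sin_derive : is_derive_pos s (fun y => 2 * (c y * D 1%nat y)).
Proof.
  intros y Hy. unfold s, c.
  assert (H := is_derive_comp sin (fun y => 2 * f y) y _ _ (is_derive_sin _)
                 (is_derive_scal _ _ 2 _ (f_derive y Hy))).
  replace (2 * (cos (2 * f y) * D 1%nat y))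
    with (scal (2 * D 1%nat y) (cos (2 * f y))); [exact H|].
  unfold scal; simpl; unfold mult; simpl. ring.
Qed.

Lemma cos_derive : is_derive_pos c (fun y => -2 * (s y * D 1%nat y)).
Proof.
  intros y Hy. unfold s, c.
  assert (H := is_derive_comp cos (fun y => 2 * f y) y _ _ (is_derive_cos _)
                 (is_derive_scal _ _ 2 _ (f_derive y Hy))).
  replace (-2 * (sin (2 * f y) * D 1%nat y))
    with (scal (2 * D 1%nat y) (- sin (2 * f y))); [exact H|].
  unfold scal; simpl; unfold mult; simpl. ring.
Qed.

Lemma D2_eq y : 0 < y -> D 2%nat y = (y / 2 - 2 / y) * D 1%nat y + s y / y ^ 2.
Proof. intros Hy. pose proof (ode y Hy). unfold s, Rdiv in *. lra. Qed.

Hypothesis f_0 : f 0 = 0.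
Hypothesis D_lim0 : forall k, lim0 (D k) (D k 0).

Lemma lim0_f : lim0 f 0.
Proof.
  apply (lim0_ext (D 0%nat)); [intros; apply D0_f; lra|].
  rewrite <- f_0, <- D0_f by lra. apply D_lim0.
Qed.

Lemma lim0_sin : lim0 s 0.
Proof.
  assert (H := lim0_comp sin _ _ (continuous_sin _) (lim0_scal 2 f 0 lim0_f)).
  now rewrite Rmult_0_r, sin_0 in H.
Qed.

Lemma lim0_cos : lim0 c 1.
Proof.
  assert (H := lim0_comp cos _ _ (continuous_cos _) (lim0_scal 2 f 0 lim0_f)).
  now rewrite Rmult_0_r, cos_0 in H.
Qed.

Section EvenDerivatives.

Variable N : nat.
Hypothesis N_pos : (1 <= N)%nat.
Hypothesis even_below_N : forall j, (j < N)%nat -> Nat.even j = true -> D j 0 = 0.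

Lemma D1_jet n : jet_tower n false (N - 1) 0 (D 1%nat).
Proof.
  apply (jet_tower_of_chain n false (N - 1) 0 (fun k => D (S k))); auto.
  intros k _. exists (D (S k) 0). split; auto.
  intros [Hk|[Hk Ho]]; [lia|]. apply even_below_N; [lia|]. now rewrite Nat.even_succ.
Qed.

Lemma sin_cos_jet n : jet_tower n true N 1 s /\ jet_tower n false N 0 c.
Proof.
  assert (Vs : vanishes_if (jet_zero true N 1 0) s) by (exists 0; split; [apply lim0_sin | auto]).
  assert (Vc : vanishes_if (jet_zero false N 0 0) c).
  { exists 1. split; [apply lim0_cos|]. unfold jet_zero. simpl. intuition (lia || discriminate). }
  induction n as [|n [Ts Tc]]; [split; split; auto|].
  split.
  - apply (jet_tower_cons _ _ _ _ _ _ Vs sin_derive), jet_tower_scal.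
    apply (jet_tower_mult_le _ _ _ _ _ _ _ _ _ _ _ Tc (D1_jet n)); lia.
  - apply (jet_tower_cons _ _ _ _ _ _ Vc cos_derive), jet_tower_scal.
    apply (jet_tower_mult_le _ _ _ _ _ _ _ _ _ _ _ Ts (D1_jet n)); lia.
Qed.

Lemma cos_sub1_jet n : jet_tower n false N 2 (fun y => c y + -1).
Proof.
  assert (V : vanishes_if (jet_zero false N 2 0) (fun y => c y + -1)).
  { exists 0. split; auto. rewrite <- (Rplus_opp_r 1).
    apply lim0_plus; [apply lim0_cos | apply lim0_const]. }
  destruct n as [|n]; [split; auto|].
  apply (jet_tower_cons _ _ _ _ _ (fun y => -2 * (s y * D 1%nat y)) V).
  - apply (is_derive_pos_ext_r _ (fun y => -2 * (s y * D 1%nat y) + 0)); [intros; ring|].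
    apply is_derive_pos_plus; [apply cos_derive | apply is_derive_pos_const].
  - apply jet_tower_scal.
    apply (jet_tower_mult_le _ _ _ _ _ _ _ _ _ _ _ (proj1 (sin_cos_jet n)) (D1_jet n)); lia.
Qed.

Lemma sin_sub_jet n : jet_tower n true (S N) 3 (fun y => s y + -2 * f y).
Proof.
  assert (V : vanishes_if (jet_zero true (S N) 3 0) (fun y => s y + -2 * f y)).
  { exists 0. split; auto. rewrite <- (Rmult_0_r (-2)), <- (Rplus_0_l (-2 * 0)).
    apply lim0_plus; [apply lim0_sin | apply lim0_scal, lim0_f]. }
  destruct n as [|n]; [split; auto|].
  apply (jet_tower_cons _ _ _ _ _ (fun y => 2 * ((c y + -1) * D 1%nat y)) V).
  - apply (is_derive_pos_ext_r _ (fun y => 2 * (c y * D 1%nat y) + -2 * D 1%nat y));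
      [intros; ring|].
    apply is_derive_pos_plus; [apply sin_derive | apply is_derive_pos_scal, f_derive].
  - apply jet_tower_scal.
    apply (jet_tower_mult_le _ _ _ _ _ _ _ _ _ _ _ (cos_sub1_jet n) (D1_jet n)); lia.
Qed.

(* Multiplying the equation by [y^2]: [y^2 f'' + 2 y f' - 2 f = rhs]. *)
Let rhs y := (s y + -2 * f y) + 1 / 2 * (y * (y * (y * D 1%nat y))).

Lemma rhs_jet n : jet_tower n true (S N) 3 rhs.
Proof.
  assert (Id := jet_tower_id n (S N)).
  assert (Y1 : jet_tower n true N 1 (fun y => y * D 1%nat y))
    by (apply (jet_tower_mult_le _ _ _ _ _ _ _ _ _ _ _ Id (D1_jet n)); lia).
  assert (Y2 : jet_tower n false (S N) 2 (fun y => y * (y * D 1%nat y)))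
    by (apply (jet_tower_mult_le _ _ _ _ _ _ _ _ _ _ _ Id Y1); lia).
  assert (Y3 : jet_tower n true (S N) 3 (fun y => y * (y * (y * D 1%nat y))))
    by (apply (jet_tower_mult_le _ _ _ _ _ _ _ _ _ _ _ Id Y2); lia).
  apply jet_tower_plus; [apply sin_sub_jet | now apply jet_tower_scal].
Qed.

(* The k-th derivative of [y^2 f'' + 2 y f' - 2 f]. *)
Let Lam k y := y * y * D (S (S k)) y + (2 * INR k + 2) * (y * D (S k) y)
               + (INR k * INR k + INR k - 2) * D k y.

Lemma Lam_derive k : is_derive_pos (Lam k) (Lam (S k)).
Proof.
  unfold Lam. eapply is_derive_pos_ext_r; cycle 1.
  - apply is_derive_pos_plus; [apply is_derive_pos_plus|].
    + apply is_derive_pos_mult; [apply is_derive_pos_mult; apply is_derive_pos_id | apply D_derive].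
    + apply is_derive_pos_scal, is_derive_pos_mult; [apply is_derive_pos_id | apply D_derive].
    + apply is_derive_pos_scal, D_derive.
  - intros y Hy. rewrite S_INR. ring.
Qed.

Lemma Lam0_rhs y : 0 < y -> Lam 0%nat y = rhs y.
Proof. intros Hy. unfold Lam, rhs. rewrite D2_eq, D0_f by lra. unfold s. simpl. field. lra. Qed.

Lemma lim0_Lam k : lim0 (Lam k) ((INR k * INR k + INR k - 2) * D k 0).
Proof.
  replace ((INR k * INR k + INR k - 2) * D k 0) with
    (0 * 0 * D (S (S k)) 0 + (2 * INR k + 2) * (0 * D (S k) 0)
     + (INR k * INR k + INR k - 2) * D k 0)
    by ring.
  apply lim0_plus; [apply lim0_plus|].
  - apply lim0_mult; [apply lim0_mult; apply lim0_id | apply D_lim0].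
  - apply lim0_scal, lim0_mult; [apply lim0_id | apply D_lim0].
  - apply lim0_scal, D_lim0.
Qed.

Lemma D_even_N : Nat.even N = true -> D N 0 = 0.
Proof.
  intros Ev.
  destruct (vanishes_of_jet_tower N true (S N) 3 Lam rhs Lam_derive Lam0_rhs (rhs_jet N) N (le_n N))
    as [l [Ll Hl]].
  rewrite (lim0_unique _ _ _ Ll (lim0_Lam N)) in Hl.
  assert (N2 : 2 <= INR N).
  { apply (le_INR 2). destruct N as [|[|n]]; [lia | discriminate | lia]. }
  apply (Rmult_eq_reg_l (INR N * INR N + INR N - 2)); [|nra].
  rewrite Hl; [ring|]. right. split; [lia|]. now rewrite <- Nat.negb_even, Ev.
Qed.

End EvenDerivatives.

Lemma D_even_zero N : forall j, (j < N)%nat -> Nat.even j = true -> D j 0 = 0.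
Proof.
  induction N as [|N IH]; intros j Hj Ev; [lia|].
  destruct (Nat.eq_dec j N) as [->|]; [|apply IH; auto; lia].
  destruct N as [|N]; [rewrite D0_f by lra; exact f_0|].
  apply D_even_N; auto. lia.
Qed.

Hypothesis f_lim : exists L : R, is_lim f p_infty (Finite L).

(* [h = y^2 f'] satisfies [h' = y h / 2 + sin (2 f)]. *)
Lemma decays_D1 : decays 3 (D 1%nat).
Proof.
  set (h := fun y => y ^ 2 * D 1%nat y).
  apply decays_of_mul_sq.
  apply (decays_of_no_blowup h (fun y => s y + y / 2 * h y) 0).
  - intros y Hy. unfold h.
    assert (Hp : is_derive (fun y => y ^ 2) y (2 * y)) by (auto_derive; auto; ring).
    assert (H := is_derive_mult _ _ _ _ _ Hp (D_derive 1%nat y ltac:(lra))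
                   ltac:(intros; apply Rmult_comm)).
    rewrite D2_eq in H by lra. simpl in H. unfold plus, mult in H; simpl in H.
    replace (s y + y / 2 * (y ^ 2 * D 1%nat y))
      with (2 * y * D 1%nat y + y * (y * 1) * ((y / 2 - 2 / y) * D 1%nat y + s y / (y * (y * 1))))
      by (simpl; field; lra).
    exact H.
  - apply (decays_ext _ (fun y => sin (2 * f y))); [intros; unfold s; ring | apply decays_sin].
  - apply (limit_no_blowup f (D 1%nat)); auto using f_derive.
  - destruct f_lim as [L HL].
    apply (limit_no_blowup (fun y => - f y) (fun y => - D 1%nat y)).
    + intros y Hy. apply (is_derive_opp f), f_derive, Hy.
    + exists (- L). apply (is_lim_opp f p_infty L HL).
    + intros y _. unfold h. ring.
Qed.

Lemma sin_cos_decay_tower n :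
  decay_tower n 1 (D 1%nat) -> decay_tower (S n) 0 s /\ decay_tower (S n) 0 c.
Proof.
  assert (step : forall m, decay_tower m 0 s -> decay_tower m 0 c -> decay_tower m 1 (D 1%nat) ->
                 decay_tower (S m) 0 s /\ decay_tower (S m) 0 c).
  { intros m Ts Tc T1. split.
    - apply (decay_tower_cons _ _ _ _ (decays_sin _) sin_derive).
      apply decay_tower_scal, (decay_tower_mult m 0 1); auto.
    - apply (decay_tower_cons _ _ _ _ (decays_cos _) cos_derive).
      apply decay_tower_scal, (decay_tower_mult m 0 1); auto. }
  induction n as [|n IH]; intros T1.
  - apply step; auto; split; [exact (decays_sin _) | exact I | exact (decays_cos _) | exact I].
  - destruct (IH (tower_pred _ _ _ T1)). now apply step.
Qed.

Let E y := -2 * (/ y * D 1%nat y) + / y * / y * s y.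

Lemma E_decay_tower m : decay_tower m 1 (D 1%nat) -> decay_tower m 2 E.
Proof.
  intros T1. assert (Ts := tower_pred _ _ _ (proj1 (sin_cos_decay_tower m T1))).
  apply decay_tower_plus.
  - apply decay_tower_scal, (decay_tower_mult m 1 1); auto using decay_tower_inv.
  - apply (decay_tower_mult m 2 0); auto. apply (decay_tower_mult m 1 1); apply decay_tower_inv.
Qed.

(* [G j] is the j-th derivative of [D 2 - y/2 D 1], which is [E] by the equation. *)
Let G j y := D (S (S j)) y - y / 2 * D (S j) y - INR j / 2 * D j y.

Lemma G_derive j : is_derive_pos (G j) (G (S j)).
Proof.
  intros y Hy. unfold G.
  assert (H4 : is_derive (fun y => y / 2) y (1 / 2)) by (auto_derive; auto; lra).
  assert (H5 := is_derive_mult _ _ _ _ _ H4 (D_derive (S j) y Hy) ltac:(intros; apply Rmult_comm)).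
  assert (H6 := is_derive_scal _ _ (INR j / 2) _ (D_derive j y Hy)).
  assert (H := is_derive_minus _ _ _ _ _
                 (is_derive_minus _ _ _ _ _ (D_derive (S (S j)) y Hy) H5) H6).
  simpl in H. unfold minus, plus, opp, mult in H; simpl in H.
  replace (D (S (S (S j))) y - y / 2 * D (S (S j)) y - INR (S j) / 2 * D (S j) y) with
   (D (S (S (S j))) y + - (1 / 2 * D (S j) y + y / 2 * D (S (S j)) y) + - (INR j / 2 * D (S j) y))
   by (rewrite S_INR; field).
  exact H.
Qed.

Lemma G0_E y : 0 < y -> G 0%nat y = E y.
Proof. intros Hy. unfold G, E. rewrite D2_eq by exact Hy. simpl. field. lra. Qed.

Lemma decays_G m : decay_tower m 1 (D 1%nat) -> decays (2 + m) (G m).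
Proof.
  intros T1. exact (decays_of_decay_tower m 2 G E G_derive G0_E (E_decay_tower m T1) m (le_n m)).
Qed.

Let D1_decays_upto m := forall j, (j <= m)%nat -> decays (3 + j) (D (S j)).

Lemma D1_decay_tower m : D1_decays_upto m -> decay_tower m 1 (D 1%nat).
Proof.
  intros Dm. apply (decay_tower_of_chain m 1 (fun k => D (S k))); auto.
  intros k Hk. apply (decays_le (3 + k)); [lia | auto].
Qed.

Lemma decays_D_weak m : D1_decays_upto m -> decays (2 + m) (D (S (S m))).
Proof.
  intros Dm.
  assert (HmD : decays (2 + m) (fun y => INR m / 2 * D m y)).
  { destruct m as [|m].
    - exists 0. intros y _. simpl. rewrite Rdiv_0_l, Rmult_0_l, Rabs_R0, Rdiv_0_l. lra.
    - apply decays_scal. apply (Dm m). lia. }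
  apply (decays_ext _ (fun y => G m y + (y / 2 * D (S m) y + INR m / 2 * D m y))).
  { intros y Hy. unfold G. ring. }
  apply decays_plus; [apply decays_G, D1_decay_tower, Dm|].
  apply decays_plus; auto. apply decays_mul_half_id. apply Dm. lia.
Qed.

(* Once [D (m + 2)] is known to be bounded, the Gaussian alternative is excluded and the
   barrier gains two powers of [y] over [decays_D_weak]. *)
Lemma decays_D_step m : D1_decays_upto m -> decays (4 + m) (D (S (S m))).
Proof.
  intros Dm. assert (W := decays_D_weak m Dm).
  assert (T1 : decay_tower (S m) 1 (D 1%nat)).
  { apply (decay_tower_of_chain (S m) 1 (fun k => D (S k))); auto.
    intros k Hk. destruct (Nat.eq_dec k (S m)) as [->|]; [exact W|].
    apply (decays_le (3 + k)); [lia | apply Dm; lia]. }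
  apply (decays_of_no_blowup _ (D (S (S (S m)))) (3 + m)).
  - intros y Hy. apply D_derive. lra.
  - apply (decays_ext _ (fun y => G (S m) y + INR (S m) / 2 * D (S m) y)).
    { intros y Hy. unfold G. ring. }
    apply decays_plus; [exact (decays_G (S m) T1)|]. apply decays_scal, Dm. lia.
  - exact (decays_no_blowup _ _ W).
  - exact (decays_no_blowup _ _ (decays_opp _ _ W)).
Qed.

Lemma D1_decays_all m : D1_decays_upto m.
Proof.
  induction m as [|m IH]; intros j Hj.
  - replace j with 0%nat by lia. exact decays_D1.
  - destruct (Nat.eq_dec j (S m)) as [->|]; [now apply decays_D_step | apply IH; lia].
Qed.

End Solution.

Theorem proposition1 (f : R -> R) (D : nat -> R -> R) :
  smooth_derivs f D ->
  (forall y, 0 < y ->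
     D 2%nat y + (2 / y - y / 2) * D 1%nat y - / (y ^ 2) * sin (2 * f y) = 0) ->
  f 0 = 0 ->
  (exists L : R, is_lim f p_infty (Finite L)) ->
  (forall k : nat, D (2 * k)%nat 0 = 0) /\
  (forall k : nat, (1 <= k)%nat ->
     exists C : R, 0 < C /\
       forall y, 1 <= y -> Rabs (D k y) <= C * / (y ^ (2 + k))).
Proof.
  intros [D0_f [D_derive D_right_derive]] ode f_0 f_lim.
  assert (D_lim0 : forall k, lim0 (D k) (D k 0))
    by (intros k; exact (lim0_of_right_derive _ _ (D_right_derive k))).
  split.
  - intros k. apply (D_even_zero f D D_derive D0_f ode f_0 D_lim0 (S (2 * k))).
    + lia.
    + now rewrite Nat.even_mul.
  - intros [|k] Hk; [lia|].
    exact (decays_pos_bound _ _ (D1_decays_all f D D_derive D0_f ode f_lim k k (le_n k))).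
Qed.
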